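(* Let $f$ be a homeomorphism of a compact metric space with the shadowing property such that $f|_{\Omega(f)}$ is expansive. Then $f$ has the L-shadowing property.
   Context: Shadowing: for every $\varepsilon>0$ there is $\delta>0$ such that for every sequence $(x_k)_{k\in\mathbb{Z}}$ with $d(f(x_k),x_{k+1})<\delta$ for all $k$ there is $y$ with $d(f^k(y),x_k)<\varepsilon$ for all $k\in\mathbb{Z}$. L-shadowing: for every $\varepsilon>0$ there is $\delta>0$ such that every sequence $(x_k)_{k\in\mathbb{Z}}$ with $d(f(x_k),x_{k+1})\le\delta$ for all $k$ and $d(f(x_k),x_{k+1})\to0$ as $|k|\to\infty$ admits $z$ with $d(f^k(z),x_k)\le\varepsilon$ for all $k$ and $d(f^k(z),x_k)\to0$ as $|k|\to\infty$. $\Omega(f)$ is the non-wandering set. $f|_{\Omega(f)}$ is expansive if there is $c>0$ such that for all $x\in\Omega(f)$, the only $y\in\Omega(f)$ with $d(f^n(x),f^n(y))\le c$ for all $n\in\mathbb{Z}$ is $y=x$. *)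

From Stdlib Require Import Reals ZArith Lra.
Open Scope R_scope.

Record MetricSpace := {
  carrier :> Type;
  dist : carrier -> carrier -> R;
  dist_nonneg : forall x y, 0 <= dist x y;
  dist_eq0 : forall x y, dist x y = 0 <-> x = y;
  dist_sym : forall x y, dist x y = dist y x;
  dist_tri : forall x y z, dist x z <= dist x y + dist y z
}.

Section Topology.
Variable X : MetricSpace.

Definition is_open (U : X -> Prop) : Prop :=
  forall x, U x -> exists r, 0 < r /\ forall y, dist X x y < r -> U y.

Definition compact_space : Prop :=
  forall (I : Type) (U : I -> X -> Prop),
    (forall i, is_open (U i)) ->
    (forall x, exists i, U i x) ->
    exists l : list I, forall x, exists i, List.In i l /\ U i x.

Definition continuous (f : X -> X) : Prop :=
  forall x eps, 0 < eps -> exists del, 0 < del /\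
    forall y, dist X x y < del -> dist X (f x) (f y) < eps.

Definition homeomorphism (f g : X -> X) : Prop :=
  continuous f /\ continuous g /\
  (forall x, g (f x) = x) /\ (forall x, f (g x) = x).

Definition iterZ (f g : X -> X) (k : Z) (x : X) : X :=
  match k with
  | Z0 => x
  | Zpos p => Nat.iter (Pos.to_nat p) f x
  | Zneg p => Nat.iter (Pos.to_nat p) g x
  end.

Definition shadowing (f g : X -> X) : Prop :=
  forall eps, 0 < eps -> exists del, 0 < del /\
    forall xs : Z -> X,
      (forall k, dist X (f (xs k)) (xs (k + 1)%Z) < del) ->
      exists y, forall k, dist X (iterZ f g k y) (xs k) < eps.

Definition tends0_Zinf (u : Z -> R) : Prop :=
  forall eps, 0 < eps -> exists N : Z, forall k, (N <= Z.abs k)%Z -> Rabs (u k) < eps.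

Definition L_shadowing (f g : X -> X) : Prop :=
  forall eps, 0 < eps -> exists del, 0 < del /\
    forall xs : Z -> X,
      (forall k, dist X (f (xs k)) (xs (k + 1)%Z) <= del) ->
      tends0_Zinf (fun k => dist X (f (xs k)) (xs (k + 1)%Z)) ->
      exists z, (forall k, dist X (iterZ f g k z) (xs k) <= eps) /\
                tends0_Zinf (fun k => dist X (iterZ f g k z) (xs k)).

Definition nonwandering (f : X -> X) (x : X) : Prop :=
  forall U : X -> Prop, is_open U -> U x ->
    exists (n : nat) (y : X), (1 <= n)%nat /\ U y /\ U (Nat.iter n f y).

Definition expansive_on_Omega (f g : X -> X) : Prop :=
  exists c, 0 < c /\
    forall x y, nonwandering f x -> nonwandering f y ->
      (forall n : Z, dist X (iterZ f g n x) (iterZ f g n y) <= c) -> y = x.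

End Topology.

(* Given eps, shadow
   a (delta-)pseudo-orbit (x_k) by z within e0 = min(eps, c)/2.  If the
   jumps of (x_k) tend to 0, then for every eta the tail of (x_k) beyond
   some N is a fine pseudo-orbit on a half-line; extending it by a true orbit
   and shadowing it gives y with f^k y within min(eta/2, e0) of x_k for k >= N.
   Hence the forward orbits of z and y stay c-close, and a compactness
   argument shows they are asymptotic: any pair of joint cluster points
   (p, q) of (f^n z, f^n y) consists of non-wandering points whose full
   orbits are c-close, so p = q by expansiveness.  Thus f^k z is eventually
   eta-close to x_k.  The backward half is the same argument for f^-1. *)

From Stdlib Require Import Rbase Rbasic_fun ZArith Lra Lia Classical List.
Open Scope R_scope.

Lemma dist_self (X : MetricSpace) (x : X) : dist X x x = 0.
Proof. apply dist_eq0. reflexivity. Qed.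

Lemma ball_open (X : MetricSpace) (x : X) (r : R) : is_open X (fun y => dist X x y < r).
Proof.
  intros y hy. exists (r - dist X x y). split; [lra|].
  intros z hz. pose proof (dist_tri X x y z). lra.
Qed.

Lemma continuous_comp (X : MetricSpace) (F G : X -> X) :
  continuous X F -> continuous X G -> continuous X (fun x => F (G x)).
Proof.
  intros HF HG x e he.
  destruct (HF (G x) e he) as [d1 [hd1 H1]].
  destruct (HG x d1 hd1) as [d2 [hd2 H2]].
  exists d2. split; auto.
Qed.

Lemma continuous_ext (X : MetricSpace) (F G : X -> X) :
  (forall x, F x = G x) -> continuous X F -> continuous X G.
Proof.
  intros E HF x e he. destruct (HF x e he) as [d [hd H]].
  exists d. split; [exact hd|]. intros y hy. rewrite <- !E. auto.
Qed.

Section Iterates.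
Variable X : MetricSpace.
Variables f g : X -> X.

Lemma iterZ_inverse (k : Z) (x : X) : iterZ X g f k x = iterZ X f g (- k) x.
Proof. destruct k; reflexivity. Qed.

Lemma iterZ_of_nat (n : nat) (x : X) : iterZ X f g (Z.of_nat n) x = Nat.iter n f x.
Proof. destruct n; [reflexivity|]. simpl. rewrite SuccNat2Pos.id_succ. reflexivity. Qed.

Hypothesis gf : forall x, g (f x) = x.
Hypothesis fg : forall x, f (g x) = x.

Lemma iterZ_succ (k : Z) (x : X) : iterZ X f g (k + 1) x = f (iterZ X f g k x).
Proof.
  destruct k as [|p|p]; [reflexivity| |].
  - simpl. rewrite Pos2Nat.inj_add, Nat.add_1_r. reflexivity.
  - destruct (Pos.succ_pred_or p) as [->|Hq]; [simpl; rewrite fg; reflexivity|].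
    rewrite <- Hq. replace (Z.neg (Pos.succ (Pos.pred p)) + 1)%Z with (Z.neg (Pos.pred p)) by lia.
    simpl. rewrite Pos2Nat.inj_succ. simpl. rewrite fg. reflexivity.
Qed.

Lemma iterZ_pred (k : Z) (x : X) : iterZ X f g (k - 1) x = g (iterZ X f g k x).
Proof.
  rewrite <- (gf (iterZ X f g (k - 1) x)), <- iterZ_succ.
  replace (k - 1 + 1)%Z with k by lia. reflexivity.
Qed.

Lemma iterZ_add (a b : Z) (x : X) :
  iterZ X f g (a + b) x = iterZ X f g a (iterZ X f g b x).
Proof.
  induction a as [|a IH|a IH] using Z.peano_ind; [reflexivity| |].
  - rewrite <- Z.add_1_r. replace (a + 1 + b)%Z with (a + b + 1)%Z by lia.
    rewrite !iterZ_succ, IH. reflexivity.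
  - rewrite <- Z.sub_1_r. replace (a - 1 + b)%Z with (a + b - 1)%Z by lia.
    rewrite !iterZ_pred, IH. reflexivity.
Qed.

End Iterates.

Lemma homeomorphism_inverse (X : MetricSpace) (f g : X -> X) :
  homeomorphism X f g -> homeomorphism X g f.
Proof. intros [cf [cg [gf fg]]]. repeat split; assumption. Qed.

Lemma iterZ_continuous (X : MetricSpace) (f g : X -> X) :
  homeomorphism X f g -> forall k, continuous X (iterZ X f g k).
Proof.
  intros [cf [cg [gf fg]]] k. induction k as [|k IH|k IH] using Z.peano_ind.
  - intros x e he. exists e. split; auto.
  - rewrite <- Z.add_1_r. apply (continuous_ext X (fun x => f (iterZ X f g k x))).
    + intros x. rewrite iterZ_succ; auto.
    + apply continuous_comp; assumption.
  - rewrite <- Z.sub_1_r. apply (continuous_ext X (fun x => g (iterZ X f g k x))).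
    + intros x. rewrite iterZ_pred; auto.
    + apply continuous_comp; assumption.
Qed.

(* If every point x has a ball of radius r_x and an index N_x attached to it
   (subject to some property Bad), compactness provides a uniform lower
   bound for finitely many radii covering X and a uniform bound on indices. *)
Lemma compact_uniform_ball_choice (X : MetricSpace) (Bad : X -> R -> nat -> Prop) :
  compact_space X -> (forall x, exists r N, 0 < r /\ Bad x r N) ->
  exists R N, 0 < R /\ forall y, exists x r M,
      Bad x r M /\ dist X x y < r /\ R <= r /\ (M <= N)%nat.
Proof.
  intros HC HB.
  set (I := {t : X * R * nat | 0 < snd (fst t) /\ Bad (fst (fst t)) (snd (fst t)) (snd t)}).
  set (U := fun (i : I) y => dist X (fst (fst (proj1_sig i))) y < snd (fst (proj1_sig i))).
  destruct (HC I U) as [l Hl].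
  - intros i. apply ball_open.
  - intros y. destruct (HB y) as [r [N [hr hb]]].
    exists (exist _ (y, r, N) (conj hr hb)). unfold U; simpl. rewrite dist_self. lra.
  - assert (Hbounds : exists R N, 0 < R /\ forall i, In i l ->
        R <= snd (fst (proj1_sig i)) /\ (snd (proj1_sig i) <= N)%nat).
    { clear Hl. induction l as [|[[[x r] M] [hr hb]] l IH].
      - exists 1, 0%nat. split; [lra|]. intros i [].
      - destruct IH as [R [N [hR H]]]. exists (Rmin R r), (Nat.max N M).
        split; [apply Rmin_pos; assumption|].
        intros j [<-|hj]; simpl.
        + split; [apply Rmin_r|lia].
        + destruct (H j hj) as [h1 h2]. pose proof (Rmin_l R r). split; [lra|lia]. }
    destruct Hbounds as [R [N [hR H]]]. exists R, N. split; [assumption|].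
    intros y. destruct (Hl y) as [i [hi hu]]. destruct (H i hi) as [h1 h2].
    destruct i as [[[x r] M] [hr hb]]. exists x, r, M. simpl in *. auto.
Qed.

Lemma cluster_point (X : MetricSpace) (v : nat -> X) (P : R -> nat -> Prop) :
  compact_space X ->
  (forall r r' n, 0 < r -> r <= r' -> P r n -> P r' n) ->
  (forall r N, 0 < r -> exists n, (N <= n)%nat /\ P r n) ->
  exists q, forall r N, 0 < r ->
    exists n, (N <= n)%nat /\ P r n /\ dist X (v n) q < r.
Proof.
  intros HC Hmono HP. apply NNPP. intros Hno.
  destruct (compact_uniform_ball_choice X
      (fun x r N => forall n, (N <= n)%nat -> P r n -> r <= dist X (v n) x) HC)
    as [R [N [hR H]]].
  - intros x. apply NNPP. intros Hx. apply Hno. exists x. intros r N hr.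
    apply NNPP. intros Hn. apply Hx. exists r, N. split; [assumption|].
    intros n hn hp. apply Rnot_lt_le. intros hl. apply Hn. exists n. auto.
  - destruct (HP R N hR) as [n [hn hp]].
    destruct (H (v n)) as [x [r [M [hb [hd [hr hM]]]]]].
    specialize (hb n ltac:(lia) (Hmono R r n hR hr hp)).
    rewrite dist_sym in hd. lra.
Qed.

Lemma joint_cluster_point (X : MetricSpace) (u v : nat -> X) (P : nat -> Prop) :
  compact_space X -> (forall N, exists n, (N <= n)%nat /\ P n) ->
  exists p q, forall r N, 0 < r -> exists n, (N <= n)%nat /\ P n /\
     dist X (u n) p < r /\ dist X (v n) q < r.
Proof.
  intros HC HP.
  destruct (cluster_point X u (fun _ => P) HC) as [p Hp].
  { intros r r' n _ _ hP. exact hP. }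
  { intros r N _. apply HP. }
  destruct (cluster_point X v (fun r n => P n /\ dist X (u n) p < r) HC) as [q Hq].
  - intros r r' n _ hr [hP hd]. split; [assumption|lra].
  - intros r N hr. destruct (Hp r N hr) as [n [hn [hP hd]]]. eauto.
  - exists p, q. intros r N hr. destruct (Hq r N hr) as [n [hn [[hP hu] hv]]]. eauto.
Qed.

Lemma orbit_cluster_nonwandering (X : MetricSpace) (f : X -> X) (z p : X) :
  (forall r N, 0 < r -> exists n, (N <= n)%nat /\ dist X (Nat.iter n f z) p < r) ->
  nonwandering X f p.
Proof.
  intros H U HU Up. destruct (HU p Up) as [r [hr Hr]].
  destruct (H r 0%nat hr) as [n1 [_ h1]].
  destruct (H r (S n1) hr) as [n2 [hn2 h2]].
  exists (n2 - n1)%nat, (Nat.iter n1 f z). repeat split; [lia| |].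
  - apply Hr. rewrite dist_sym. assumption.
  - rewrite <- Nat.iter_add. replace (n2 - n1 + n1)%nat with n2 by lia.
    apply Hr. rewrite dist_sym. assumption.
Qed.

Lemma nonwandering_inverse (X : MetricSpace) (f g : X -> X) (x : X) :
  (forall x, g (f x) = x) -> nonwandering X f x -> nonwandering X g x.
Proof.
  intros gf H U HU Ux. destruct (H U HU Ux) as [n [y [hn [Uy Un]]]].
  exists n, (Nat.iter n f y). repeat split; [exact hn|exact Un|].
  assert (Hback : forall m y, Nat.iter m g (Nat.iter m f y) = y).
  { induction m as [|m IH]; intros y'; [reflexivity|].
    rewrite Nat.iter_succ_r. change (Nat.iter (S m) f y') with (f (Nat.iter m f y')).
    rewrite gf. apply IH. }
  rewrite Hback. exact Uy.
Qed.

Definition expansive_with (X : MetricSpace) (f g : X -> X) (c : R) : Prop :=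
  forall x y, nonwandering X f x -> nonwandering X f y ->
    (forall n : Z, dist X (iterZ X f g n x) (iterZ X f g n y) <= c) -> y = x.

Lemma expansive_with_inverse (X : MetricSpace) (f g : X -> X) (c : R) :
  homeomorphism X f g -> expansive_with X f g c -> expansive_with X g f c.
Proof.
  intros [_ [_ [gf fg]]] H x y hx hy hn. apply H.
  - apply (nonwandering_inverse X g f); assumption.
  - apply (nonwandering_inverse X g f); assumption.
  - intros n. specialize (hn (- n)%Z). rewrite !(iterZ_inverse X f g), Z.opp_involutive in hn.
    exact hn.
Qed.

Section Asymptotic.
Variable X : MetricSpace.
Variables f g : X -> X.
Hypothesis homeo : homeomorphism X f g.

Let gf : forall x, g (f x) = x. Proof. apply homeo. Qed.
Let fg : forall x, f (g x) = x. Proof. apply homeo. Qed.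

Lemma cluster_orbits_close (c : R) (z y p q : X) (N : Z) (P : nat -> Prop) :
  (forall k, (N <= k)%Z -> dist X (iterZ X f g k z) (iterZ X f g k y) <= c) ->
  (forall r M, 0 < r -> exists n, (M <= n)%nat /\ P n /\
     dist X (iterZ X f g (Z.of_nat n) z) p < r /\
     dist X (iterZ X f g (Z.of_nat n) y) q < r) ->
  forall m, dist X (iterZ X f g m p) (iterZ X f g m q) <= c.
Proof.
  intros Hclose Hpq m. apply Rnot_lt_le. intros hlt.
  set (gap := (dist X (iterZ X f g m p) (iterZ X f g m q) - c) / 2).
  assert (hgap : 0 < gap) by (unfold gap; lra).
  destruct (iterZ_continuous X f g homeo m p gap hgap) as [d1 [hd1 H1]].
  destruct (iterZ_continuous X f g homeo m q gap hgap) as [d2 [hd2 H2]].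
  destruct (Hpq (Rmin d1 d2) (Z.to_nat (N - m)) (Rmin_pos _ _ hd1 hd2))
    as [n [hn [_ [hu hv]]]].
  pose proof (Rmin_l d1 d2). pose proof (Rmin_r d1 d2).
  rewrite dist_sym in hu, hv.
  specialize (H1 (iterZ X f g (Z.of_nat n) z) ltac:(lra)).
  specialize (H2 (iterZ X f g (Z.of_nat n) y) ltac:(lra)).
  rewrite <- !iterZ_add in H1, H2 by assumption.
  specialize (Hclose (m + Z.of_nat n)%Z ltac:(lia)).
  set (zk := iterZ X f g (m + Z.of_nat n) z) in *.
  set (yk := iterZ X f g (m + Z.of_nat n) y) in *.
  pose proof (dist_tri X (iterZ X f g m p) zk (iterZ X f g m q)).
  pose proof (dist_tri X zk yk (iterZ X f g m q)).
  pose proof (dist_sym X yk (iterZ X f g m q)).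
  unfold gap in *. lra.
Qed.

Hypothesis compact : compact_space X.

Lemma forward_asymptotic (c : R) (z y : X) (N : Z) :
  expansive_with X f g c ->
  (forall k, (N <= k)%Z -> dist X (iterZ X f g k z) (iterZ X f g k y) <= c) ->
  forall eta, 0 < eta -> exists M : Z, forall k, (M <= k)%Z ->
      dist X (iterZ X f g k z) (iterZ X f g k y) < eta.
Proof.
  intros Hexp Hclose eta heta. apply NNPP. intros Hno.
  set (u := fun n : nat => iterZ X f g (Z.of_nat n) z).
  set (v := fun n : nat => iterZ X f g (Z.of_nat n) y).
  destruct (joint_cluster_point X u v (fun n => eta <= dist X (u n) (v n)) compact)
    as [p [q Hpq]].
  { intros N'. apply NNPP. intros Hn. apply Hno. exists (Z.of_nat N').
    intros k hk. apply Rnot_le_lt. intros hle. apply Hn.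
    exists (Z.to_nat k). split; [lia|]. unfold u, v. rewrite Z2Nat.id by lia. exact hle. }
  assert (Hp : nonwandering X f p).
  { apply (orbit_cluster_nonwandering X f z). intros r M hr.
    destruct (Hpq r M hr) as [n [hn [_ [h _]]]]. unfold u in h.
    rewrite iterZ_of_nat in h. eauto. }
  assert (Hq : nonwandering X f q).
  { apply (orbit_cluster_nonwandering X f y). intros r M hr.
    destruct (Hpq r M hr) as [n [hn [_ [_ h]]]]. unfold v in h.
    rewrite iterZ_of_nat in h. eauto. }
  assert (Heq : q = p).
  { apply Hexp; [assumption|assumption|].
    exact (cluster_orbits_close c z y p q N _ Hclose Hpq). }
  subst q. destruct (Hpq (eta / 2) 0%nat ltac:(lra)) as [n [_ [hP [hu hv]]]].
  pose proof (dist_tri X (u n) p (v n)). rewrite (dist_sym X p) in *. lra.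
Qed.

End Asymptotic.

Section HalfLineShadowing.
Variable X : MetricSpace.
Variables f g : X -> X.
Hypothesis fg : forall x, f (g x) = x.
Hypothesis shadow : shadowing X f g.

Definition extend_left (xs : Z -> X) (N : Z) (k : Z) : X :=
  if Z_le_dec N k then xs k else iterZ X f g (k - N) (xs N).

Definition extend_right (xs : Z -> X) (N : Z) (k : Z) : X :=
  if Z_le_dec k N then xs k else iterZ X f g (k - N) (xs N).

Lemma shadowing_forward_half_line (e : R) : 0 < e -> exists d, 0 < d /\
  forall (xs : Z -> X) (N : Z),
    (forall k, (N <= k)%Z -> dist X (f (xs k)) (xs (k + 1)%Z) < d) ->
    exists y, forall k, (N <= k)%Z -> dist X (iterZ X f g k y) (xs k) < e.
Proof.
  intros he. destruct (shadow e he) as [d [hd Hd]]. exists d. split; [exact hd|].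
  intros xs N Hjumps. destruct (Hd (extend_left xs N)) as [y Hy].
  - intros k. unfold extend_left.
    destruct (Z_le_dec N k), (Z_le_dec N (k + 1)); [auto|lia| |];
      rewrite <- iterZ_succ by assumption.
    + replace (k - N + 1)%Z with 0%Z by lia. replace (k + 1)%Z with N by lia.
      simpl. rewrite dist_self. lra.
    + replace (k - N + 1)%Z with (k + 1 - N)%Z by lia. rewrite dist_self. lra.
  - exists y. intros k hk. specialize (Hy k). unfold extend_left in Hy.
    destruct (Z_le_dec N k); [exact Hy|lia].
Qed.

Lemma shadowing_backward_half_line (e : R) : 0 < e -> exists d, 0 < d /\
  forall (xs : Z -> X) (N : Z),
    (forall k, (k + 1 <= N)%Z -> dist X (f (xs k)) (xs (k + 1)%Z) < d) ->
    exists y, forall k, (k <= N)%Z -> dist X (iterZ X f g k y) (xs k) < e.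
Proof.
  intros he. destruct (shadow e he) as [d [hd Hd]]. exists d. split; [exact hd|].
  intros xs N Hjumps. destruct (Hd (extend_right xs N)) as [y Hy].
  - intros k. unfold extend_right.
    destruct (Z_le_dec k N), (Z_le_dec (k + 1) N); [auto| | lia|].
    + replace k with N by lia. replace (N + 1 - N)%Z with (0 + 1)%Z by lia.
      rewrite iterZ_succ by assumption. simpl. rewrite dist_self. lra.
    + rewrite <- iterZ_succ by assumption.
      replace (k - N + 1)%Z with (k + 1 - N)%Z by lia. rewrite dist_self. lra.
  - exists y. intros k hk. specialize (Hy k). unfold extend_right in Hy.
    destruct (Z_le_dec k N); [exact Hy|lia].
Qed.

End HalfLineShadowing.

Section TailTracking.
Variable X : MetricSpace.
Variables f g : X -> X.
Hypothesis compact : compact_space X.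
Hypothesis homeo : homeomorphism X f g.
Hypothesis shadow : shadowing X f g.
Variable c : R.
Hypothesis expansive : expansive_with X f g c.

Let fg : forall x, f (g x) = x. Proof. apply homeo. Qed.

Lemma forward_tail_tracking (xs : Z -> X) (z : X) (e0 : R) :
  2 * e0 <= c ->
  (forall k, dist X (iterZ X f g k z) (xs k) < e0) ->
  (forall d, 0 < d -> exists N, forall k, (N <= k)%Z -> dist X (f (xs k)) (xs (k + 1)%Z) < d) ->
  forall eta, 0 < eta -> exists M, forall k, (M <= k)%Z -> dist X (iterZ X f g k z) (xs k) < eta.
Proof.
  intros hc Hz Hjumps eta heta.
  assert (he0 : 0 < e0) by (pose proof (dist_nonneg X (iterZ X f g 0 z) (xs 0%Z)); pose proof (Hz 0%Z); lra).
  pose proof (Rmin_l (eta / 2) e0). pose proof (Rmin_r (eta / 2) e0).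
  set (e1 := Rmin (eta / 2) e0) in *.
  assert (he1 : 0 < e1) by (apply Rmin_pos; lra).
  destruct (shadowing_forward_half_line X f g fg shadow e1 he1) as [d [hd Hd]].
  destruct (Hjumps d hd) as [N HN]. destruct (Hd xs N HN) as [y Hy].
  assert (Hclose : forall k, (N <= k)%Z ->
            dist X (iterZ X f g k z) (iterZ X f g k y) <= c).
  { intros k hk. specialize (Hz k). specialize (Hy k hk).
    pose proof (dist_tri X (iterZ X f g k z) (xs k) (iterZ X f g k y)).
    rewrite (dist_sym X (xs k)) in *. lra. }
  destruct (forward_asymptotic X f g homeo compact c z y N expansive Hclose (eta / 2))
    as [M HM]; [lra|].
  exists (Z.max M N). intros k hk.
  specialize (HM k ltac:(lia)). specialize (Hy k ltac:(lia)).
  pose proof (dist_tri X (iterZ X f g k z) (iterZ X f g k y) (xs k)). lra.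
Qed.

(* The same statement as k -> -oo, using expansiveness of the inverse. *)
Lemma backward_tail_tracking (xs : Z -> X) (z : X) (e0 : R) :
  2 * e0 <= c ->
  (forall k, dist X (iterZ X f g k z) (xs k) < e0) ->
  (forall d, 0 < d -> exists N, forall k, (k + 1 <= N)%Z -> dist X (f (xs k)) (xs (k + 1)%Z) < d) ->
  forall eta, 0 < eta -> exists M, forall k, (k <= M)%Z -> dist X (iterZ X f g k z) (xs k) < eta.
Proof.
  intros hc Hz Hjumps eta heta.
  assert (he0 : 0 < e0) by (pose proof (dist_nonneg X (iterZ X f g 0 z) (xs 0%Z)); pose proof (Hz 0%Z); lra).
  pose proof (Rmin_l (eta / 2) e0). pose proof (Rmin_r (eta / 2) e0).
  set (e1 := Rmin (eta / 2) e0) in *.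
  assert (he1 : 0 < e1) by (apply Rmin_pos; lra).
  destruct (shadowing_backward_half_line X f g fg shadow e1 he1) as [d [hd Hd]].
  destruct (Hjumps d hd) as [N HN]. destruct (Hd xs N HN) as [y Hy].
  assert (Hclose : forall k, (- N <= k)%Z ->
            dist X (iterZ X g f k z) (iterZ X g f k y) <= c).
  { intros k hk. rewrite !(iterZ_inverse X f g).
    specialize (Hz (- k)%Z). specialize (Hy (- k)%Z ltac:(lia)).
    pose proof (dist_tri X (iterZ X f g (- k) z) (xs (- k)%Z) (iterZ X f g (- k) y)).
    rewrite (dist_sym X (xs (- k)%Z)) in *. lra. }
  destruct (forward_asymptotic X g f (homeomorphism_inverse X f g homeo) compact c z y (- N)
              (expansive_with_inverse X f g c homeo expansive) Hclose (eta / 2))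
    as [M HM]; [lra|].
  exists (Z.min (- M) N). intros k hk.
  specialize (HM (- k)%Z ltac:(lia)). rewrite !(iterZ_inverse X f g), Z.opp_involutive in HM.
  specialize (Hy k ltac:(lia)).
  pose proof (dist_tri X (iterZ X f g k z) (iterZ X f g k y) (xs k)). lra.
Qed.

End TailTracking.

Theorem mainTheorem13 (X : MetricSpace) (f g : X -> X) :
  compact_space X ->
  homeomorphism X f g ->
  shadowing X f g ->
  expansive_on_Omega X f g ->
  L_shadowing X f g.
Proof.
  intros HC Hh Hs [c [hc Hexp]] eps heps.
  set (e0 := Rmin eps c / 2).
  pose proof (Rmin_l eps c). pose proof (Rmin_r eps c). pose proof (Rmin_pos _ _ heps hc).
  destruct (Hs e0 ltac:(unfold e0; lra)) as [d [hd Hd]].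
  exists (d / 2). split; [lra|]. intros xs Hxs Htend.
  destruct (Hd xs) as [z Hz]; [intros k; specialize (Hxs k); lra|].
  exists z. split; [intros k; specialize (Hz k); unfold e0 in *; lra|].
  assert (Hjumps : forall d, 0 < d -> exists N, forall k, (N <= Z.abs k)%Z ->
                     dist X (f (xs k)) (xs (k + 1)%Z) < d).
  { intros d' hd'. destruct (Htend d' hd') as [N HN]. exists N. intros k hk.
    specialize (HN k hk). rewrite Rabs_pos_eq in HN by apply dist_nonneg. exact HN. }
  intros eta heta.
  destruct (forward_tail_tracking X f g HC Hh Hs c Hexp xs z e0 ltac:(unfold e0; lra) Hz)
    with (eta := eta) as [Mf HMf]; [|exact heta|].
  { intros d' hd'. destruct (Hjumps d' hd') as [N HN]. exists (Z.abs N).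
    intros k hk. apply HN. lia. }
  destruct (backward_tail_tracking X f g HC Hh Hs c Hexp xs z e0 ltac:(unfold e0; lra) Hz)
    with (eta := eta) as [Mb HMb]; [|exact heta|].
  { intros d' hd'. destruct (Hjumps d' hd') as [N HN]. exists (- Z.abs N)%Z.
    intros k hk. apply HN. lia. }
  exists (Z.max 1 (Z.max Mf (- Mb))). intros k hk.
  rewrite Rabs_pos_eq by apply dist_nonneg.
  destruct (Z_le_dec 0 k); [apply HMf | apply HMb]; lia.
Qed.
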